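(* Let $h>0$ and let $f:C([-h,0],\mathbb{R}_+)\to\mathbb{R}_+$ be a continuous functional which maps closed bounded sets into bounded subsets of $\mathbb{R}_+$. Consider $x'(t)=-x(t)+f(x_t)$, $x\ge0$, and assume that every nonnegative solution admits a unique extension to the whole right semi-axis. Suppose $f(0)=0$ and $f(K)=K$ for some $K>0$ (here $0$ and $K$ denote constant functions), and that the constant solution $x\equiv K$ attracts every solution with nonnegative, not identically zero initial function. Then there exists a positive solution $\psi:\mathbb{R}\to(0,\infty)$ of this equation defined for all $t\in\mathbb{R}$ such that $\psi(-\infty)=0$ and $\psi(+\infty)=K$.
   Context: $C([-h,0],\mathbb{R}_+)$ carries the sup norm $|\phi|=\max_{s\in[-h,0]}|\phi(s)|$, and $x_t\in C([-h,0],\mathbb{R}_+)$ is defined by $x_t(s)=x(t+s)$. *)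

From Stdlib Require Import Reals Lra.
From Coquelicot Require Import Coquelicot.
Open Scope R_scope.

(* Elements of C([-h,0],R_+) are modelled by functions R -> R, of which
   only the restriction to [-h,0] matters. *)

Definition cont_on (a b : R) (g : R -> R) : Prop :=
  forall s, a <= s <= b -> forall eps, 0 < eps ->
    exists delta, 0 < delta /\
      forall u, a <= u <= b -> Rabs (u - s) < delta -> Rabs (g u - g s) < eps.

Definition inC (h : R) (phi : R -> R) : Prop :=
  cont_on (- h) 0 phi /\ (forall s, - h <= s <= 0 -> 0 <= phi s).

Definition dist_le (h : R) (phi psi : R -> R) (d : R) : Prop :=
  forall s, - h <= s <= 0 -> Rabs (phi s - psi s) <= d.

Definition seg (x : R -> R) (t : R) : R -> R := fun s => x (t + s).

Definition cst (c : R) : R -> R := fun _ => c.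

Definition functional_continuous (h : R) (f : (R -> R) -> R) : Prop :=
  forall phi, inC h phi -> forall eps, 0 < eps ->
    exists delta, 0 < delta /\
      forall psi, inC h psi -> dist_le h phi psi delta ->
        Rabs (f psi - f phi) < eps.

(* f maps closed bounded sets of C into bounded sets; it suffices
   (and is equivalent) to ask it for the closed balls centered at 0 *)
Definition maps_bounded (h : R) (f : (R -> R) -> R) : Prop :=
  forall M, exists B, forall phi, inC h phi -> dist_le h phi (cst 0) M ->
    Rabs (f phi) <= B.

Definition is_solution (h : R) (f : (R -> R) -> R) (phi x : R -> R) : Prop :=
  (forall s, - h <= s <= 0 -> x s = phi s) /\
  (forall t, - h <= t -> 0 <= x t) /\
  (forall T, cont_on (- h) T x) /\
  (forall t, 0 < t -> is_derive x t (- x t + f (seg x t))).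

From Stdlib Require Import Reals Lra Lia Classical ClassicalEpsilon FunctionalExtensionality.
From Coquelicot Require Import Coquelicot.
Open Scope R_scope.

(* Take c = K/2 and let B bound f on the ball of radius c, so that a solution with
   values in [0, c] has slope at most c + B.  The solution from the constant
   history e > 0 is attracted to K, hence reaches c at some time tau_e; since the
   zero history only yields the zero solution, compactness (Arzela-Ascoli) forces
   tau_e -> +oo as e -> 0.  Translating these solutions so that they reach c at
   time 0, a second compactness argument gives a solution g on (-oo, 0] with
   0 <= g <= c and g(0) = c; continued forward from its history at 0, it tends to
   K.  Limits of the translates g(. + t_k), t_k -> -oo, are entire solutions
   bounded by c < K, hence zero by attraction, so g(-oo) = 0.  Finally
   e^t psi(t) is nondecreasing because f >= 0, so a zero of psi would propagate
   backwards and then, by uniqueness, forwards.  To pass to the limit in the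
   equation, solutions are described by mean-value inequalities ([secant_bounds])
   rather than by derivatives. *)

Lemma Rabs_mult_lt L x c : 0 < c -> Rabs x < c / (Rabs L + 1) -> Rabs L * Rabs x < c.
Proof.
  intros Hc Hx. pose proof (Rabs_pos L). pose proof (Rabs_pos x).
  apply Rle_lt_trans with ((Rabs L + 1) * Rabs x); [nra|].
  apply Rmult_lt_reg_l with (/ (Rabs L + 1)); [apply Rinv_0_lt_compat; lra|].
  rewrite <- Rmult_assoc, Rinv_l, Rmult_1_l by lra. rewrite Rmult_comm. exact Hx.
Qed.

Lemma interior_radius a b t d : a < t < b -> 0 < d ->
  exists r, 0 < r /\ r <= d /\ r <= t - a /\ r <= b - t.
Proof.
  intros Ht Hd. exists (Rmin d (Rmin (t - a) (b - t))).
  pose proof (Rmin_l d (Rmin (t - a) (b - t))). pose proof (Rmin_r d (Rmin (t - a) (b - t))).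
  pose proof (Rmin_l (t - a) (b - t)). pose proof (Rmin_r (t - a) (b - t)).
  assert (0 < Rmin d (Rmin (t - a) (b - t))) by (apply Rmin_pos; [|apply Rmin_pos]; lra).
  lra.
Qed.

Lemma cluster_point_of_bounded (u : nat -> R) a b : (forall n, a <= u n <= b) ->
  exists c, a <= c <= b /\
    forall r, 0 < r -> forall N, exists p, (N <= p)%nat /\ Rabs (u p - c) < r.
Proof.
  intros Hu.
  destruct (Bolzano_Weierstrass u _ (compact_P3 a b) Hu) as [c Hc].
  assert (V : forall r, 0 < r -> forall N, exists p, (N <= p)%nat /\ Rabs (u p - c) < r).
  { intros r Hr N. apply (Hc (fun y => Rabs (y - c) < r)).
    exists (mkposreal r Hr). now intros y Hy. }
  exists c. split; [|exact V].
  split; apply Rnot_lt_le; intro Hlt.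
  - destruct (V (a - c) ltac:(lra) 0%nat) as [p [_ Hp]].
    specialize (Hu p). apply Rabs_lt_between in Hp. lra.
  - destruct (V (c - b) ltac:(lra) 0%nat) as [p [_ Hp]].
    specialize (Hu p). apply Rabs_lt_between in Hp. lra.
Qed.

Lemma inv_INR_succ_small d : 0 < d ->
  exists N : nat, forall n, (N <= n)%nat -> / (INR n + 1) < d.
Proof.
  intros Hd. destruct (INR_unbounded (/ d)) as [N HN]. exists N. intros n Hn.
  apply le_INR in Hn. pose proof (pos_INR n).
  rewrite <- (Rinv_inv d). apply Rinv_lt_contravar; [|lra].
  apply Rmult_lt_0_compat; [apply Rinv_0_lt_compat|]; lra.
Qed.

Definition lipschitz_on (L a b : R) (g : R -> R) : Prop :=
  forall s t, a <= s <= b -> a <= t <= b -> Rabs (g s - g t) <= L * Rabs (s - t).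

Definition lipschitz (L : R) (g : R -> R) : Prop :=
  forall s t, Rabs (g s - g t) <= L * Rabs (s - t).

Lemma lipschitz_on_sub L a b a' b' g :
  lipschitz_on L a b g -> a <= a' -> b' <= b -> lipschitz_on L a' b' g.
Proof. intros Hg Ha Hb s t Hs Ht. apply Hg; lra. Qed.

Lemma lipschitz_on_ext L a b g g' : lipschitz_on L a b g ->
  (forall t, a <= t <= b -> g t = g' t) -> lipschitz_on L a b g'.
Proof. intros Hg E s t Hs Ht. rewrite <- !E by assumption. now apply Hg. Qed.

Lemma lipschitz_on_glue L1 L2 a b c g : 0 <= L1 -> 0 <= L2 ->
  lipschitz_on L1 a b g -> lipschitz_on L2 b c g -> lipschitz_on (Rmax L1 L2) a c g.
Proof.
  intros P1 P2 H1 H2.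
  assert (W : forall L u v, L <= Rmax L1 L2 ->
            Rabs (g u - g v) <= L * Rabs (u - v) -> Rabs (g u - g v) <= Rmax L1 L2 * Rabs (u - v)).
  { intros L u v HL Huv. eapply Rle_trans; [exact Huv|].
    apply Rmult_le_compat_r; [apply Rabs_pos | exact HL]. }
  pose proof (Rmax_l L1 L2); pose proof (Rmax_r L1 L2).
  assert (Through : forall s t, s <= b <= t -> a <= s -> t <= c ->
            Rabs (g s - g t) <= Rmax L1 L2 * Rabs (s - t)).
  { intros s t Hst Hs Ht.
    replace (g s - g t) with ((g s - g b) + (g b - g t)) by ring.
    eapply Rle_trans; [apply Rabs_triang|].
    eapply Rle_trans; [apply Rplus_le_compat; [apply (W L1) | apply (W L2)];
                       [assumption | apply H1; lra | assumption | apply H2; lra]|].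
    rewrite (Rabs_left1 (s - b)), (Rabs_left1 (b - t)), (Rabs_left1 (s - t)) by lra. lra. }
  intros s t Hs Ht.
  destruct (Rle_dec s b), (Rle_dec t b).
  - apply (W L1); [assumption | apply H1; lra].
  - apply Through; lra.
  - rewrite Rabs_minus_sym, (Rabs_minus_sym s). apply Through; lra.
  - apply (W L2); [assumption | apply H2; lra].
Qed.

Lemma lipschitz_on_translate L a b c g : lipschitz_on L a b g ->
  lipschitz_on L (a + c) (b + c) (fun t => g (t - c)).
Proof.
  intros Hg s t Hs Ht. replace (s - t) with ((s - c) - (t - c)) by ring. apply Hg; lra.
Qed.

Lemma lipschitz_on_cont_on L a b g : lipschitz_on L a b g -> cont_on a b g.
Proof.
  intros Hg s Hs eps Heps.
  exists (eps / (Rabs L + 1)). split; [apply Rdiv_lt_0_compat; pose proof (Rabs_pos L); lra|].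
  intros u Hu Hus. eapply Rle_lt_trans; [now apply Hg|].
  eapply Rle_lt_trans; [|exact (Rabs_mult_lt L (u - s) eps Heps Hus)].
  apply Rmult_le_compat_r; [apply Rabs_pos | apply Rle_abs].
Qed.

Lemma cont_on_sub a b a' b' g : cont_on a b g -> a <= a' -> b' <= b -> cont_on a' b' g.
Proof.
  intros Hg Ha Hb s Hs eps Heps. destruct (Hg s ltac:(lra) eps Heps) as [d [Hd Hu]].
  exists d. split; [exact Hd|]. intros u Hu' Hus. apply Hu; [lra | exact Hus].
Qed.

Lemma cont_on_ext a b g g' : cont_on a b g ->
  (forall t, a <= t <= b -> g t = g' t) -> cont_on a b g'.
Proof.
  intros Hg E s Hs eps Heps. destruct (Hg s Hs eps Heps) as [d [Hd Hu]].
  exists d. split; [exact Hd|]. intros u Hu' Hus. rewrite <- !E by assumption. now apply Hu.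
Qed.

Lemma cont_on_shift a b c g : cont_on a b g -> cont_on (a - c) (b - c) (fun s => g (c + s)).
Proof.
  intros Hg s Hs eps Heps. destruct (Hg (c + s) ltac:(lra) eps Heps) as [d [Hd Hu]].
  exists d. split; [exact Hd|]. intros u Hu' Hus. apply Hu; [lra|].
  now replace (c + u - (c + s)) with (u - s) by ring.
Qed.

Lemma cont_on_continuity_pt a b g s : cont_on a b g -> a < s < b -> continuity_pt g s.
Proof.
  intros Hg Hs eps Heps. destruct (Hg s ltac:(lra) eps Heps) as [d [Hd Hu]].
  destruct (interior_radius a b s d Hs Hd) as [r Hr].
  exists r. split; [lra|]. intros x [_ Hx]. simpl in *. unfold R_dist in *.
  apply Rabs_lt_between in Hx. apply Hu; [lra | apply Rabs_lt_between; lra].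
Qed.

Lemma inC_seg h g t : cont_on (t - h) t g ->
  (forall s, t - h <= s <= t -> 0 <= g s) -> inC h (seg g t).
Proof.
  intros Hg Hn. split.
  - pose proof (cont_on_shift _ _ t g Hg) as Hs.
    replace (t - h - t) with (- h) in Hs by ring. now replace (t - t) with 0 in Hs by ring.
  - intros s Hs. apply Hn. lra.
Qed.

Lemma inC_ext h phi psi : inC h phi ->
  (forall s, - h <= s <= 0 -> phi s = psi s) -> inC h psi.
Proof.
  intros [Hc Hn] E. split; [now apply (cont_on_ext _ _ phi)|].
  intros s Hs. rewrite <- E by assumption. now apply Hn.
Qed.

Lemma inC_cst h e : 0 <= e -> inC h (cst e).
Proof.
  intros He. split; [|intros; unfold cst; lra].
  intros s _ eps Heps. exists 1. split; [lra|].
  intros. unfold cst. rewrite Rminus_eq_0, Rabs_R0. lra.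
Qed.

Definition clamp (lo hi t : R) : R := Rmax lo (Rmin t hi).

Lemma clamp_in lo hi t : lo <= hi -> lo <= clamp lo hi t <= hi.
Proof.
  intros H. unfold clamp. split; [apply Rmax_l|].
  apply Rmax_lub; [exact H | apply Rmin_r].
Qed.

Lemma clamp_id lo hi t : lo <= t <= hi -> clamp lo hi t = t.
Proof. intros H. unfold clamp. now rewrite Rmin_left, Rmax_right by lra. Qed.

Lemma clamp_contraction lo hi s t :
  Rabs (clamp lo hi s - clamp lo hi t) <= Rabs (s - t).
Proof.
  pose proof (Rle_abs (s - t)). pose proof (Rle_abs (t - s)).
  rewrite (Rabs_minus_sym t s) in *. apply Rabs_le_between.
  unfold clamp, Rmax, Rmin.
  destruct (Rle_dec s hi), (Rle_dec t hi), (Rle_dec lo s), (Rle_dec lo t),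
    (Rle_dec lo hi), (Rle_dec lo (Rmin s hi)), (Rle_dec lo (Rmin t hi)); lra.
Qed.

Lemma lipschitz_clamp L lo hi x : 0 <= L -> lo <= hi -> lipschitz_on L lo hi x ->
  lipschitz L (fun t => x (clamp lo hi t)).
Proof.
  intros HL Hlh Hx s t. eapply Rle_trans; [apply Hx; apply clamp_in; exact Hlh|].
  apply Rmult_le_compat_l; [exact HL | apply clamp_contraction].
Qed.

Lemma cont_on_bounded a b g : a <= b -> cont_on a b g ->
  exists M, forall t, a <= t <= b -> Rabs (g t) <= M.
Proof.
  intros Hab Hg. apply NNPP. intro Hno.
  assert (Big : forall n : nat, exists t, a <= t <= b /\ INR n < Rabs (g t)).
  { intro n. apply NNPP. intro Hn. apply Hno. exists (INR n). intros t Ht.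
    apply Rnot_lt_le. intro Hl. apply Hn. now exists t. }
  destruct (choice _ Big) as [s Hs].
  destruct (cluster_point_of_bounded s a b ltac:(intro n; apply Hs)) as [c [Hc Hcl]].
  destruct (Hg c Hc 1 ltac:(lra)) as [d [Hd Hu]].
  destruct (INR_unbounded (Rabs (g c) + 1)) as [N HN].
  destruct (Hcl d Hd N) as [p [Hp Hsp]].
  destruct (Hs p) as [Hsp0 Hsp1].
  specialize (Hu (s p) Hsp0 Hsp). apply le_INR in Hp.
  pose proof (Rabs_triang_inv (g (s p)) (g c)). lra.
Qed.

Lemma first_crossing x c : (forall T, cont_on 0 T x) -> x 0 < c ->
  (exists M, forall t, M < t -> c < x t) ->
  exists tau, 0 <= tau /\ (forall s, 0 <= s <= tau -> x s <= c) /\ x tau = c.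
Proof.
  intros Hc H0 [M HM].
  set (E := fun t => 0 <= t /\ forall s, 0 <= s <= t -> x s <= c).
  assert (E0 : E 0) by (split; [lra | intros s Hs; replace s with 0 by lra; lra]).
  assert (Ebound : bound E).
  { exists M. intros t [Ht0 Ht]. apply Rnot_lt_le. intro HMt.
    specialize (HM t HMt). specialize (Ht t ltac:(lra)). lra. }
  destruct (completeness E Ebound (ex_intro _ 0 E0)) as [tau [Hub Hlub]].
  assert (Htau : 0 <= tau) by now apply Hub.
  assert (Below : forall s, 0 <= s < tau -> x s <= c).
  { intros s Hs. apply Rnot_lt_le. intro Hx.
    assert (tau <= s); [|lra].
    apply Hlub. intros t [Ht1 Ht2]. apply Rnot_lt_le. intro Hst. specialize (Ht2 s). lra. }
  assert (Near : forall eps, 0 < eps -> exists d, 0 < d /\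
            forall u, 0 <= u <= tau + 1 -> Rabs (u - tau) < d -> Rabs (x u - x tau) < eps)
    by (apply Hc; lra).
  assert (Le : x tau <= c).
  { apply Rnot_lt_le. intro Hx.
    destruct (Near (x tau - c) ltac:(lra)) as [d [Hd Hu]].
    destruct (Req_dec tau 0) as [Z|Z]; [rewrite Z in Hx; lra|].
    set (s := tau - Rmin d tau / 2).
    assert (Hs : 0 <= s < tau /\ Rabs (s - tau) < d).
    { pose proof (Rmin_l d tau). pose proof (Rmin_r d tau).
      assert (0 < Rmin d tau) by (apply Rmin_pos; lra).
      unfold s. rewrite Rabs_left1 by lra. lra. }
    specialize (Below s (proj1 Hs)). specialize (Hu s ltac:(lra) (proj2 Hs)).
    apply Rabs_lt_between in Hu. lra. }
  assert (Ge : c <= x tau).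
  { apply Rnot_lt_le. intro Hx.
    destruct (Near (c - x tau) ltac:(lra)) as [d [Hd Hu]].
    set (s := tau + Rmin d 1 / 2).
    assert (Hs : tau < s <= tau + 1 /\ s - tau < d).
    { pose proof (Rmin_l d 1). pose proof (Rmin_r d 1).
      assert (0 < Rmin d 1) by (apply Rmin_pos; lra). unfold s. lra. }
    assert (s <= tau); [|lra].
    apply Hub. split; [lra|]. intros u Hu'. destruct (Rlt_dec u tau); [apply Below; lra|].
    specialize (Hu u ltac:(lra) ltac:(rewrite Rabs_right; lra)).
    apply Rabs_lt_between in Hu. lra. }
  exists tau. split; [exact Htau|]. split; [|lra].
  intros s Hs. destruct (Rlt_dec s tau); [apply Below; lra|]. replace s with tau by lra. lra.
Qed.

Lemma is_lim_p_infty_gt x (l c : R) : is_lim x p_infty l -> c < l ->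
  exists M, forall t, M < t -> c < x t.
Proof.
  intros Hx Hc. apply is_lim_spec in Hx.
  destruct (Hx (mkposreal (l - c) ltac:(lra))) as [M HM]. simpl in HM.
  exists M. intros t Ht. specialize (HM t Ht). apply Rabs_lt_between in HM. lra.
Qed.

Lemma exp_mul_nondecreasing (psi d : R -> R) s t :
  (forall u, is_derive psi u (d u)) -> (forall u, - psi u <= d u) -> s <= t ->
  exp s * psi s <= exp t * psi t.
Proof.
  intros Hd Hge Hst.
  assert (D : forall u, derivable_pt_lim (fun v => exp v * psi v) u (exp u * (psi u + d u))).
  { intro u. replace (exp u * (psi u + d u)) with (exp u * psi u + exp u * d u) by ring.
    apply (derivable_pt_lim_mult exp psi); [apply derivable_pt_lim_exp|].
    apply is_derive_Reals, Hd. }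
  destruct (MVT_gen (fun v => exp v * psi v) s t (fun u => exp u * (psi u + d u)))
    as [c [_ Hc]].
  - intros x _. apply is_derive_Reals, D.
  - intros x _. apply derivable_continuous_pt. eexists. apply D.
  - assert (0 <= exp c * (psi c + d c) * (t - s)).
    { apply Rmult_le_pos; [apply Rmult_le_pos; [left; apply exp_pos|]|]; specialize (Hge c); lra. }
    lra.
Qed.

(* A derivative-free form of [g' = F] on [a,b]: every secant slope of [g] lies
   between the bounds of [F] on the same subinterval.  Unlike the derivative,
   it passes to locally uniform limits. *)
Definition secant_bounds (g F : R -> R) (a b : R) : Prop :=
  forall a' b' m M, a <= a' -> a' <= b' -> b' <= b ->
    (forall x, a' <= x <= b' -> m <= F x <= M) ->
    m * (b' - a') <= g b' - g a' <= M * (b' - a').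

Lemma secant_bounds_sub g F a b a' b' :
  secant_bounds g F a b -> a <= a' -> b' <= b -> secant_bounds g F a' b'.
Proof. intros H Ha Hb x y m M A1 A2 A3 Hx. apply H; auto; lra. Qed.

Lemma secant_bounds_ext g g' F F' a b : secant_bounds g F a b ->
  (forall t, a <= t <= b -> g t = g' t) -> (forall t, a <= t <= b -> F t = F' t) ->
  secant_bounds g' F' a b.
Proof.
  intros H Eg EF a' b' m M H1 H2 H3 Hb.
  rewrite <- (Eg b'), <- (Eg a') by lra.
  apply H; auto. intros x Hx. rewrite EF by lra. auto.
Qed.

Lemma secant_bounds_shift g F a b c : secant_bounds g F a b ->
  secant_bounds (fun t => g (t - c)) (fun t => F (t - c)) (a + c) (b + c).
Proof.
  intros H a' b' m M H1 H2 H3 Hb.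
  replace (b' - a') with ((b' - c) - (a' - c)) by ring.
  apply H; try lra. intros x Hx. replace x with ((x + c) - c) by ring. apply Hb. lra.
Qed.

Lemma secant_bounds_glue g F a b c :
  secant_bounds g F a b -> secant_bounds g F b c -> secant_bounds g F a c.
Proof.
  intros H1 H2 a' b' m M Ha Hab Hb Hx.
  destruct (Rle_dec b' b); [now apply H1|].
  destruct (Rle_dec b a'); [apply H2; auto; lra|].
  assert (A := H1 a' b m M Ha ltac:(lra) ltac:(lra) ltac:(intros; apply Hx; lra)).
  assert (B := H2 b b' m M ltac:(lra) ltac:(lra) Hb ltac:(intros; apply Hx; lra)).
  replace (b' - a') with ((b - a') + (b' - b)) by ring.
  replace (g b' - g a') with ((g b - g a') + (g b' - g b)) by ring.
  split; rewrite Rmult_plus_distr_l; lra.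
Qed.

Lemma secant_bounds_lipschitz_on g F a b L : secant_bounds g F a b ->
  (forall x, a <= x <= b -> Rabs (F x) <= L) -> lipschitz_on L a b g.
Proof.
  intros H HF.
  assert (HB : forall x, a <= x <= b -> - L <= F x <= L).
  { intros x Hx. now apply Rabs_le_between, HF. }
  assert (Ord : forall s t, a <= s <= t -> t <= b -> Rabs (g s - g t) <= L * Rabs (s - t)).
  { intros s t Hs Ht.
    assert (A := H s t (- L) L ltac:(lra) ltac:(lra) ltac:(lra)
                   ltac:(intros; apply HB; lra)).
    rewrite (Rabs_minus_sym (g s)), (Rabs_minus_sym s t), (Rabs_right (t - s)) by lra.
    apply Rabs_le_between. lra. }
  intros s t Hs Ht. destruct (Rle_dec s t).
  - apply Ord; lra.
  - rewrite (Rabs_minus_sym s t), (Rabs_minus_sym (g s)). apply Ord; lra.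
Qed.

Lemma secant_bounds_of_derive g F a b :
  (forall t, a < t < b -> is_derive g t (F t)) ->
  (forall t, a <= t <= b -> continuity_pt g t) -> secant_bounds g F a b.
Proof.
  intros Hd Hc a' b' m M H1 H2 H3 Hb.
  destruct (Req_dec a' b') as [E|E].
  { subst. rewrite !Rminus_eq_0, !Rmult_0_r. lra. }
  destruct (MVT_gen g a' b' F) as [c [Hc1 Hc2]].
  - intros y Hy. rewrite Rmin_left in Hy by lra. rewrite Rmax_right in Hy by lra.
    apply Hd. lra.
  - intros y Hy. rewrite Rmin_left in Hy by lra. rewrite Rmax_right in Hy by lra.
    apply Hc. lra.
  - rewrite Rmin_left in Hc1 by lra. rewrite Rmax_right in Hc1 by lra.
    rewrite Hc2. specialize (Hb c Hc1).
    split; apply Rmult_le_compat_r; lra.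
Qed.

Lemma secant_bounds_is_derive g F a b t :
  secant_bounds g F a b -> cont_on a b F -> a < t < b -> is_derive g t (F t).
Proof.
  intros HB HF Ht. apply is_derive_Reals. intros eps Heps.
  destruct (HF t ltac:(lra) (eps / 2) ltac:(lra)) as [d [Hd Hnear]].
  destruct (interior_radius a b t d Ht Hd) as [r Hr].
  exists (mkposreal r (proj1 Hr)). intros k Hk Hkr. simpl in Hkr.
  assert (Near : forall x, Rabs (x - t) <= Rabs k ->
            F t - eps / 2 <= F x <= F t + eps / 2).
  { intros x Hx. apply Rabs_le_between in Hx.
    assert (A : Rabs (F x - F t) < eps / 2).
    { apply Hnear; [|apply Rabs_lt_between]; lra. }
    apply Rabs_lt_between in A. lra. }
  apply Rabs_lt_between in Hkr. apply Rabs_lt_between.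
  destruct (Rlt_dec 0 k).
  - assert (B := HB t (t + k) (F t - eps / 2) (F t + eps / 2) ltac:(lra) ltac:(lra) ltac:(lra)
                  ltac:(intros x Hx; apply Near; rewrite !Rabs_right by lra; lra)).
    replace (t + k - t) with k in B by ring.
    assert (Q : (g (t + k) - g t) / k * k = g (t + k) - g t) by (field; lra).
    set (q := (g (t + k) - g t) / k) in *.
    split; apply Rmult_lt_reg_r with k; nra.
  - assert (k < 0) by lra.
    assert (B := HB (t + k) t (F t - eps / 2) (F t + eps / 2) ltac:(lra) ltac:(lra) ltac:(lra)
                  ltac:(intros x Hx; apply Near; rewrite Rabs_left1, (Rabs_left1 k) by lra; lra)).
    replace (t - (t + k)) with (- k) in B by ring.
    assert (Q : (g (t + k) - g t) / k * (- k) = g t - g (t + k)) by (field; lra).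
    set (q := (g (t + k) - g t) / k) in *.
    split; apply Rmult_lt_reg_r with (- k); nra.
Qed.

(** * Arzela-Ascoli *)

Definition strict_incr (r : nat -> nat) : Prop := forall j, (r j < r (S j))%nat.

Lemma strict_incr_lt r : strict_incr r -> forall i j, (i < j)%nat -> (r i < r j)%nat.
Proof. intros Hr i j Hij. induction Hij; [apply Hr | specialize (Hr m); lia]. Qed.

Lemma strict_incr_ge_id r : strict_incr r -> forall i, (i <= r i)%nat.
Proof. intros Hr i. induction i; [lia | specialize (Hr i); lia]. Qed.

Lemma strict_incr_comp r1 r2 : strict_incr r1 -> strict_incr r2 -> strict_incr (fun j => r1 (r2 j)).
Proof. intros H1 H2 j. apply strict_incr_lt; auto. Qed.

Lemma subseq_oscillation_le (v : nat -> R) C eta : 0 < eta ->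
  (forall n, Rabs (v n) <= C) ->
  exists r, strict_incr r /\ forall j k, Rabs (v (r j) - v (r k)) <= eta.
Proof.
  intros Heta Hv.
  destruct (cluster_point_of_bounded v (- C) C ltac:(intro n; now apply Rabs_le_between))
    as [c [_ Hc]].
  destruct (choice (fun N p => (N <= p)%nat /\ Rabs (v p - c) < eta / 2)
              ltac:(intro N; apply Hc; lra)) as [next Hnext].
  set (r := fix r j := match j with O => next O | S j' => next (S (r j')) end).
  exists r. split.
  - intro j. simpl. destruct (Hnext (S (r j))). lia.
  - assert (A : forall j, Rabs (v (r j) - c) < eta / 2) by (intros [|j]; apply Hnext).
    intros j k. specialize (A j) as A1. specialize (A k) as A2.
    apply Rabs_lt_between in A1, A2. apply Rabs_le_between. lra.
Qed.

Lemma subseq_oscillation_le_finite (w : nat -> R -> R) C eta (p : nat -> R) (N : nat) :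
  0 < eta -> (forall k t, Rabs (w k t) <= C) ->
  exists r, strict_incr r /\
    forall i, (i <= N)%nat -> forall j k, Rabs (w (r j) (p i) - w (r k) (p i)) <= eta.
Proof.
  intros Heta Hw. induction N as [|N IH].
  - destruct (subseq_oscillation_le (fun n => w n (p O)) C eta Heta ltac:(intro; apply Hw))
      as [r [Hr H]].
    exists r. split; [exact Hr|]. intros i Hi. now replace i with O by lia.
  - destruct IH as [r1 [Hr1 H1]].
    destruct (subseq_oscillation_le (fun n => w (r1 n) (p (S N))) C eta Heta
                ltac:(intro; apply Hw)) as [r2 [Hr2 H2]].
    exists (fun j => r1 (r2 j)). split; [now apply strict_incr_comp|].
    intros i Hi j k. destruct (Nat.eq_dec i (S N)) as [->|]; [apply H2 | apply H1; lia].
Qed.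

Lemma grid_near a d (N : nat) t : 0 < d -> a <= t <= a + INR N * d ->
  exists i, (i <= N)%nat /\ Rabs (t - (a + INR i * d)) <= d.
Proof.
  intros Hd. induction N as [|N IH]; intros Ht.
  - exists O. split; [lia|]. simpl in *. apply Rabs_le_between. lra.
  - destruct (Rle_dec t (a + INR N * d)).
    + destruct IH as [i [Hi Hi']]; [lra|]. exists i. split; [lia | exact Hi'].
    + exists (S N). split; [lia|]. rewrite S_INR in *. apply Rabs_le_between. lra.
Qed.

(* Equi-Lipschitz functions that nearly agree on a fine grid nearly agree everywhere. *)
Lemma subseq_uniform_oscillation_le C L (w : nat -> R -> R) (m e : R) :
  0 <= L -> 0 < e -> (forall k t, Rabs (w k t) <= C) -> (forall k, lipschitz L (w k)) ->
  exists r, strict_incr r /\ forall j k t, Rabs t <= m -> Rabs (w (r j) t - w (r k) t) <= e.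
Proof.
  intros HL He Hb Hl.
  set (d := e / (3 * (L + 1))).
  assert (Hd : 0 < d) by (unfold d; apply Rdiv_lt_0_compat; lra).
  assert (Ld : L * d <= e / 3).
  { unfold d. apply Rle_trans with ((L + 1) * (e / (3 * (L + 1)))).
    - apply Rmult_le_compat_r; [apply Rlt_le, Rdiv_lt_0_compat|]; lra.
    - right. field. lra. }
  destruct (INR_unbounded (2 * Rabs m / d)) as [N HN].
  assert (Span : 2 * Rabs m <= INR N * d).
  { assert (E : 2 * Rabs m / d * d = 2 * Rabs m) by (field; lra). nra. }
  destruct (subseq_oscillation_le_finite w C (e / 3) (fun i => - Rabs m + INR i * d) N
              ltac:(lra) Hb) as [r [Hr H]].
  exists r. split; [exact Hr|]. intros j k t Ht.
  pose proof (Rle_abs m). apply Rabs_le_between in Ht.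
  destruct (grid_near (- Rabs m) d N t Hd ltac:(lra)) as [i [Hi Hti]].
  specialize (H i Hi j k). cbv beta in H.
  set (p := - Rabs m + INR i * d) in *.
  assert (Close : forall k, Rabs (w k t - w k p) <= e / 3).
  { intro k'. eapply Rle_trans; [apply Hl|].
    eapply Rle_trans; [|exact Ld]. now apply Rmult_le_compat_l. }
  pose proof (Close (r j)) as A1. pose proof (Close (r k)) as A2.
  apply Rabs_le_between in A1, A2, H. apply Rabs_le_between. lra.
Qed.

Definition locally_uniform_limit (u : nat -> R -> R) (g : R -> R) : Prop :=
  forall T eps, 0 < eps -> exists N, forall j, (N <= j)%nat -> forall t, Rabs t <= T ->
    Rabs (u j t - g t) <= eps.

Lemma Rabs_le_of_is_lim_seq (v : nat -> R) (l x d : R) (N : nat) : is_lim_seq v l ->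
  (forall k, (N <= k)%nat -> Rabs (x - v k) <= d) -> Rabs (x - l) <= d.
Proof.
  intros Hv Hd. apply Rle_plus_epsilon. intros e He.
  apply is_lim_seq_spec in Hv.
  destruct (Hv (mkposreal e He)) as [M HM]. simpl in HM.
  specialize (HM (Nat.max N M) ltac:(lia)). specialize (Hd (Nat.max N M) ltac:(lia)).
  replace (x - l) with ((x - v (Nat.max N M)) + (v (Nat.max N M) - l)) by ring.
  eapply Rle_trans; [apply Rabs_triang | lra].
Qed.

(* Diagonal extraction: the [m]-th stage refines the previous ones on [[-m, m]]. *)
Lemma subseq_uniformly_cauchy (u : nat -> R -> R) C L : 0 <= L ->
  (forall k t, Rabs (u k t) <= C) -> (forall k, lipschitz L (u k)) ->
  exists sg, strict_incr sg /\ forall m j k t, (m < j)%nat -> (m < k)%nat -> Rabs t <= INR m ->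
    Rabs (u (sg j) t - u (sg k) t) <= / (INR m + 1).
Proof.
  intros HL Hb Hl.
  destruct (choice (fun (Sm : (nat -> nat) * nat) r => strict_incr r /\
     forall j k t, Rabs t <= INR (snd Sm) ->
       Rabs (u (fst Sm (r j)) t - u (fst Sm (r k)) t) <= / (INR (snd Sm) + 1)))
    as [refine Hrefine].
  { intros [S0 m]. apply (subseq_uniform_oscillation_le C L (fun n => u (S0 n)) (INR m));
      [exact HL | | intros; apply Hb | intro; apply Hl].
    simpl. apply Rinv_0_lt_compat. pose proof (pos_INR m). lra. }
  set (Sig := fix Sig (m : nat) : nat -> nat :=
          match m with O => fun i => i | S m' => fun i => Sig m' (refine (Sig m', m') i) end).
  assert (SigS : forall m i, Sig (S m) i = Sig m (refine (Sig m, m) i)) by reflexivity.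
  assert (Sig_incr : forall m, strict_incr (Sig m)).
  { induction m; intro j; [simpl; lia|]. rewrite !SigS.
    apply strict_incr_lt; [exact IHm | apply (Hrefine (Sig m, m))]. }
  assert (Sig_factor : forall m n, (S m <= n)%nat -> forall i, exists x, Sig n i = Sig (S m) x).
  { intros m n Hmn. induction Hmn; intro i; [now exists i|].
    rewrite SigS. apply IHHmn. }
  exists (fun j => Sig j j). split.
  - intro j. rewrite SigS. apply strict_incr_lt; [apply Sig_incr|].
    pose proof (strict_incr_ge_id _ (proj1 (Hrefine (Sig j, j))) (S j)). lia.
  - intros m j k t Hj Hk Ht.
    destruct (Sig_factor m j Hj j) as [x ->]. destruct (Sig_factor m k Hk k) as [y ->].
    rewrite !SigS. now apply (Hrefine (Sig m, m)).
Qed.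

Lemma arzela_ascoli (u : nat -> R -> R) C L : 0 <= L ->
  (forall k t, Rabs (u k t) <= C) -> (forall k, lipschitz L (u k)) ->
  exists sg g, strict_incr sg /\ locally_uniform_limit (fun j => u (sg j)) g.
Proof.
  intros HL Hb Hl. destruct (subseq_uniformly_cauchy u C L HL Hb Hl) as [sg [Hsg Cauchy]].
  assert (Index : forall T eps, 0 < eps -> exists m : nat, T <= INR m /\ / (INR m + 1) < eps).
  { intros T eps Heps.
    destruct (inv_INR_succ_small eps Heps) as [N1 HN1]. destruct (INR_unbounded T) as [N2 HN2].
    exists (Nat.max N1 N2). split; [|apply HN1; lia].
    pose proof (le_INR _ _ (Nat.le_max_r N1 N2)). lra. }
  set (g := fun t => real (Lim_seq (fun j => u (sg j) t))).
  assert (Hg : forall t, is_lim_seq (fun j => u (sg j) t) (g t)).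
  { intro t. apply Lim_seq_correct', ex_lim_seq_cauchy_corr. intro eps.
    destruct (Index (Rabs t) eps (cond_pos eps)) as [m [Hm Hme]].
    exists (S m). intros n k Hn Hk. eapply Rle_lt_trans; [|exact Hme].
    apply Cauchy; lia || lra. }
  exists sg, g. split; [exact Hsg|]. intros T eps Heps.
  destruct (Index T eps Heps) as [m [Hm Hme]].
  exists (S m). intros j Hj t Ht.
  apply (Rabs_le_of_is_lim_seq _ _ _ _ (S m) (Hg t)). intros k Hk.
  apply Rlt_le, Rle_lt_trans with (/ (INR m + 1)); [apply Cauchy; lia || lra | exact Hme].
Qed.

Lemma locally_uniform_limit_lipschitz u g L : locally_uniform_limit u g ->
  (forall k, lipschitz L (u k)) -> lipschitz L g.
Proof.
  intros Hlim Hl s t. apply Rle_plus_epsilon. intros e He.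
  destruct (Hlim (Rmax (Rabs s) (Rabs t)) (e / 2) ltac:(lra)) as [N HN].
  pose proof (Rmax_l (Rabs s) (Rabs t)). pose proof (Rmax_r (Rabs s) (Rabs t)).
  pose proof (HN N (le_n N) s ltac:(lra)) as A1. pose proof (HN N (le_n N) t ltac:(lra)) as A2.
  pose proof (Hl N s t) as A3.
  apply Rabs_le_between in A1, A2, A3. apply Rabs_le_between. lra.
Qed.

Lemma locally_uniform_limit_ge u g lo : locally_uniform_limit u g ->
  (forall k t, lo <= u k t) -> forall t, lo <= g t.
Proof.
  intros Hlim Hb t. apply Rle_plus_epsilon. intros e He.
  destruct (Hlim (Rabs t) e He) as [N HN].
  pose proof (HN N (le_n N) t (Rle_refl _)) as A. apply Rabs_le_between in A.
  specialize (Hb N t). lra.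
Qed.

Lemma locally_uniform_limit_le u g hi : locally_uniform_limit u g ->
  (forall k t, u k t <= hi) -> forall t, g t <= hi.
Proof.
  intros Hlim Hb t. apply Rle_plus_epsilon. intros e He.
  destruct (Hlim (Rabs t) e He) as [N HN].
  pose proof (HN N (le_n N) t (Rle_refl _)) as A. apply Rabs_le_between in A.
  specialize (Hb N t). lra.
Qed.

Lemma locally_uniform_limit_vanishing u g a b : locally_uniform_limit u g ->
  (forall k t, a <= t <= b -> 0 <= u k t <= / (INR k + 1)) -> forall t, a <= t <= b -> g t = 0.
Proof.
  intros Hlim Hb t Ht.
  assert (Small : forall e, 0 < e -> Rabs (g t) <= e).
  { intros e He.
    destruct (Hlim (Rabs t) (e / 2) ltac:(lra)) as [N1 HN1].
    destruct (inv_INR_succ_small (e / 2) ltac:(lra)) as [N2 HN2].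
    pose proof (HN1 (Nat.max N1 N2) ltac:(lia) t (Rle_refl _)) as A.
    pose proof (HN2 (Nat.max N1 N2) ltac:(lia)). pose proof (Hb (Nat.max N1 N2) t Ht).
    apply Rabs_le_between in A. apply Rabs_le_between. lra. }
  apply Rabs_eq_0, Rle_antisym; [|apply Rabs_pos].
  apply Rle_plus_epsilon. intros e He. rewrite Rplus_0_l. now apply Small.
Qed.

Lemma locally_uniform_limit_value u g L t v (tau : nat -> R) :
  locally_uniform_limit u g -> (forall k, lipschitz L (u k)) -> (forall k, u k (tau k) = v) ->
  (forall r, 0 < r -> forall N, exists p, (N <= p)%nat /\ Rabs (tau p - t) < r) ->
  g t = v.
Proof.
  intros Hlim Hl Hv Hcl.
  assert (Small : forall e, 0 < e -> Rabs (g t - v) <= e).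
  { intros e He.
    destruct (Hlim (Rabs t) (e / 2) ltac:(lra)) as [N HN].
    destruct (Hcl (e / 2 / (Rabs L + 1)) ltac:(apply Rdiv_lt_0_compat;
                pose proof (Rabs_pos L); lra) N) as [p [Hp Hclose]].
    pose proof (HN p Hp t (Rle_refl _)) as A.
    assert (B : Rabs (u p t - v) <= e / 2).
    { rewrite <- (Hv p). eapply Rle_trans; [apply Hl|].
      eapply Rle_trans; [apply Rmult_le_compat_r; [apply Rabs_pos | apply Rle_abs]|].
      left. apply Rabs_mult_lt; [lra|]. now rewrite Rabs_minus_sym. }
    replace (g t - v) with (- (u p t - g t) + (u p t - v)) by ring.
    eapply Rle_trans; [apply Rabs_triang|]. rewrite Rabs_Ropp. lra. }
  apply Rminus_diag_uniq, Rabs_eq_0, Rle_antisym; [|apply Rabs_pos].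
  apply Rle_plus_epsilon. intros e He. rewrite Rplus_0_l. now apply Small.
Qed.

(** * The equation [x' = - x + f x_t] *)

Definition rhs (f : (R -> R) -> R) (g : R -> R) (t : R) : R := - g t + f (seg g t).

Section Functional.

Variables (h : R) (f : (R -> R) -> R).
Hypothesis h_pos : 0 < h.
Hypothesis f_cont : functional_continuous h f.

Lemma inC_seg_lipschitz_on L a b g t : lipschitz_on L (a - h) b g ->
  (forall s, a - h <= s <= b -> 0 <= g s) -> a <= t <= b -> inC h (seg g t).
Proof.
  intros Hg Hn Ht. apply inC_seg; [|intros; apply Hn; lra].
  apply (lipschitz_on_cont_on L). eapply lipschitz_on_sub; [exact Hg | lra | lra].
Qed.

Lemma dist_le_seg L a b g s t : lipschitz_on L (a - h) b g -> a <= s <= b -> a <= t <= b ->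
  dist_le h (seg g t) (seg g s) (Rabs L * Rabs (s - t)).
Proof.
  intros Hg Hs Ht u Hu. unfold seg.
  eapply Rle_trans; [apply Hg; lra|].
  replace (t + u - (s + u)) with (- (s - t)) by ring. rewrite Rabs_Ropp.
  apply Rmult_le_compat_r; [apply Rabs_pos | apply Rle_abs].
Qed.

Lemma f_local phi psi : inC h phi ->
  (forall s, - h <= s <= 0 -> phi s = psi s) -> f phi = f psi.
Proof.
  intros Hphi E. apply NNPP. intro Hne.
  assert (Hpos : 0 < Rabs (f psi - f phi)) by (apply Rabs_pos_lt; intro; apply Hne; lra).
  destruct (f_cont phi Hphi _ Hpos) as [d [Hd H]].
  assert (Close : dist_le h phi psi d).
  { intros s Hs. rewrite E, Rminus_eq_0, Rabs_R0 by exact Hs. lra. }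
  specialize (H psi (inC_ext h phi psi Hphi E) Close). lra.
Qed.

Lemma rhs_local g g' t : inC h (seg g t) ->
  (forall s, t - h <= s <= t -> g s = g' s) -> rhs f g t = rhs f g' t.
Proof.
  intros Hg E. unfold rhs. rewrite E by lra. f_equal.
  apply f_local; [exact Hg|]. intros s Hs. unfold seg. apply E. lra.
Qed.

(* Counterexamples along a sequence of segments would accumulate at a segment
   where [f] is continuous. *)
Lemma f_uniformly_continuous_along L a b g :
  lipschitz_on L (a - h) b g -> (forall s, a - h <= s <= b -> 0 <= g s) ->
  forall eps, 0 < eps -> exists d, 0 < d /\ forall s phi, a <= s <= b -> inC h phi ->
    dist_le h phi (seg g s) d -> Rabs (f phi - f (seg g s)) < eps.
Proof.
  intros Hg Hn eps Heps. apply NNPP. intro Hno.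
  assert (Bad : forall n : nat, exists s, a <= s <= b /\ exists phi, inC h phi /\
            dist_le h phi (seg g s) (/ (INR n + 1)) /\ eps <= Rabs (f phi - f (seg g s))).
  { intro n. apply NNPP. intro Hn0. apply Hno. exists (/ (INR n + 1)). split.
    { apply Rinv_0_lt_compat. pose proof (pos_INR n). lra. }
    intros s phi Hs Hp Hd. apply Rnot_le_lt. intro Hle. apply Hn0.
    exists s. split; [exact Hs | now exists phi]. }
  destruct (choice _ Bad) as [s Hs].
  destruct (cluster_point_of_bounded s a b ltac:(intro n; apply Hs)) as [c [Hcab Hcl]].
  assert (Cc : inC h (seg g c)) by (apply (inC_seg_lipschitz_on L a b); auto).
  destruct (f_cont _ Cc (eps / 2) ltac:(lra)) as [dc [Hdc Hcont]].
  destruct (inv_INR_succ_small (dc / 2) ltac:(lra)) as [N HN].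
  destruct (Hcl (dc / 2 / (Rabs L + 1)) ltac:(apply Rdiv_lt_0_compat;
              pose proof (Rabs_pos L); lra) N) as [p [Hp Hsp]].
  destruct (Hs p) as [Hsp0 [phi [Cphi [Dphi Ephi]]]].
  assert (Seg : dist_le h (seg g c) (seg g (s p)) (dc / 2)).
  { intros u Hu. eapply Rle_trans; [now apply (dist_le_seg L a b)|].
    left. apply Rabs_mult_lt; [lra | exact Hsp]. }
  assert (Cs : inC h (seg g (s p))) by (apply (inC_seg_lipschitz_on L a b); auto).
  assert (A1 : Rabs (f (seg g (s p)) - f (seg g c)) < eps / 2).
  { apply Hcont; [exact Cs|]. intros u Hu. specialize (Seg u Hu). lra. }
  assert (A2 : Rabs (f phi - f (seg g c)) < eps / 2).
  { apply Hcont; [exact Cphi|]. intros u Hu.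
    replace (seg g c u - phi u) with ((seg g c u - seg g (s p) u) - (phi u - seg g (s p) u))
      by ring.
    eapply Rle_trans; [apply Rabs_triang|]. rewrite Rabs_Ropp.
    specialize (Seg u Hu). specialize (Dphi u Hu). specialize (HN p Hp). lra. }
  apply Rabs_lt_between in A1, A2.
  assert (Rabs (f phi - f (seg g (s p))) < eps) by (apply Rabs_lt_between; lra). lra.
Qed.

Lemma rhs_cont_on L a b g : lipschitz_on L (a - h) b g ->
  (forall s, a - h <= s <= b -> 0 <= g s) -> cont_on a b (rhs f g).
Proof.
  intros Hg Hn t Ht eps Heps.
  destruct (f_uniformly_continuous_along L a b g Hg Hn (eps / 2) ltac:(lra)) as [d [Hd Hu]].
  set (r := Rmin d (eps / 2)).
  assert (Hr : 0 < r /\ r <= d /\ r <= eps / 2).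
  { unfold r. split; [apply Rmin_pos; lra | split; [apply Rmin_l | apply Rmin_r]]. }
  exists (r / (Rabs L + 1)). split; [apply Rdiv_lt_0_compat; pose proof (Rabs_pos L); lra|].
  intros s Hs Hst. pose proof (Rabs_mult_lt L (s - t) r ltac:(lra) Hst) as Small.
  assert (G : Rabs (g s - g t) < eps / 2).
  { eapply Rle_lt_trans; [apply Hg; lra|].
    eapply Rle_lt_trans; [|apply Rlt_le_trans with r; [exact Small | lra]].
    apply Rmult_le_compat_r; [apply Rabs_pos | apply Rle_abs]. }
  assert (F : Rabs (f (seg g s) - f (seg g t)) < eps / 2).
  { apply Hu; [exact Ht | now apply (inC_seg_lipschitz_on L a b) |].
    intros u Hu'. eapply Rle_trans; [now apply (dist_le_seg L a b g t s)|].
    rewrite Rabs_minus_sym. lra. }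
  unfold rhs.
  replace (- g s + f (seg g s) - (- g t + f (seg g t)))
    with (- (g s - g t) + (f (seg g s) - f (seg g t))) by ring.
  eapply Rle_lt_trans; [apply Rabs_triang|]. rewrite Rabs_Ropp. lra.
Qed.

Lemma secant_bounds_limit L a b (u : nat -> R -> R) g :
  (forall k, lipschitz L (u k)) -> (forall k s, 0 <= u k s) -> locally_uniform_limit u g ->
  (forall N, exists k, (N <= k)%nat /\ secant_bounds (u k) (rhs f (u k)) a b) ->
  secant_bounds g (rhs f g) a b.
Proof.
  intros Hl Hn Hlim Hfreq a' b' m M H1 H2 H3 Hb.
  assert (Lg : lipschitz_on L (a - h) b g).
  { intros s t _ _. now apply (locally_uniform_limit_lipschitz u). }
  assert (Ng : forall s, 0 <= g s) by now apply (locally_uniform_limit_ge u).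
  set (D := b' - a').
  assert (Approx : forall eta, 0 < eta -> exists k,
     (m - eta) * D <= u k b' - u k a' <= (M + eta) * D /\
     Rabs (u k b' - g b') <= eta /\ Rabs (u k a' - g a') <= eta).
  { intros eta Heta.
    destruct (f_uniformly_continuous_along L a b g Lg ltac:(auto) (eta / 2) ltac:(lra))
      as [d [Hd Hf]].
    destruct (Hlim (Rabs a + Rabs b + h) (Rmin d (eta / 2)) ltac:(apply Rmin_pos; lra))
      as [N HN].
    pose proof (Rmin_l d (eta / 2)). pose proof (Rmin_r d (eta / 2)).
    assert (Near : forall k t, (N <= k)%nat -> a - h <= t <= b ->
              Rabs (u k t - g t) <= Rmin d (eta / 2)).
    { intros k t Hk Ht. apply HN; [exact Hk|].
      pose proof (Rle_abs a); pose proof (Rle_abs (- a)); pose proof (Rle_abs b);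
      pose proof (Rle_abs (- b)); rewrite Rabs_Ropp in *. apply Rabs_le_between. lra. }
    destruct (Hfreq N) as [k [Hk HB]].
    exists k. split; [|split; eapply Rle_trans; [apply Near; auto; lra | lra |
                                               apply Near; auto; lra | lra]].
    apply HB; auto. intros x Hx. specialize (Hb x Hx).
    assert (E1 : Rabs (u k x - g x) <= eta / 2).
    { eapply Rle_trans; [apply Near; auto; lra | lra]. }
    assert (E2 : Rabs (f (seg (u k) x) - f (seg g x)) < eta / 2).
    { apply Hf; [lra | apply (inC_seg_lipschitz_on L a b);
                         [intros s t _ _; apply Hl | intros; apply Hn | lra] |].
      intros v Hv. eapply Rle_trans; [apply Near; auto; lra | lra]. }
    unfold rhs in *. apply Rabs_le_between in E1. apply Rabs_lt_between in E2. lra. }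
  assert (HD : 0 <= D) by (unfold D; lra).
  assert (Choose : forall e, 0 < e -> exists eta, 0 < eta /\ eta * D + 2 * eta = e).
  { intros e He. exists (e / (D + 2)).
    split; [apply Rdiv_lt_0_compat; lra | field; lra]. }
  split; apply Rle_plus_epsilon; intros e He; destruct (Choose e He) as [eta [Heta E]];
    destruct (Approx eta Heta) as [k [[A1 A2] [A3 A4]]];
    apply Rabs_le_between in A3, A4; fold D; nra.
Qed.

Lemma solution_seg_inC phi x t : is_solution h f phi x -> 0 <= t -> inC h (seg x t).
Proof.
  intros [_ [Hn [Hc _]]] Ht. apply inC_seg; [|intros; apply Hn; lra].
  eapply cont_on_sub; [apply (Hc t) | lra | lra].
Qed.

Lemma solution_secant_bounds phi x a b : is_solution h f phi x -> 0 <= a ->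
  secant_bounds x (rhs f x) a b.
Proof.
  intros [_ [_ [Hc Hd]]] Ha. apply secant_bounds_of_derive.
  - intros t Ht. apply Hd. lra.
  - intros t Ht. apply (cont_on_continuity_pt (- h) (b + 1)); [apply Hc | lra].
Qed.

Hypothesis f_bounded : maps_bounded h f.

Lemma solution_lipschitz_on phi x T : is_solution h f phi x -> 0 <= T ->
  exists L, 0 <= L /\ lipschitz_on L 0 T x.
Proof.
  intros Hx HT.
  destruct (cont_on_bounded (- h) T x ltac:(lra) (proj1 (proj2 (proj2 Hx)) T)) as [M HM].
  destruct (f_bounded M) as [B HB].
  assert (Hrhs : forall t, 0 <= t <= T -> Rabs (rhs f x t) <= M + B).
  { intros t Ht. unfold rhs.
    assert (A : Rabs (f (seg x t)) <= B).
    { apply HB; [apply (solution_seg_inC phi); [exact Hx | lra] |].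
      intros u Hu. unfold seg, cst. rewrite Rminus_0_r. apply HM. lra. }
    eapply Rle_trans; [apply Rabs_triang|]. rewrite Rabs_Ropp.
    pose proof (HM t ltac:(lra)). lra. }
  exists (M + B). split; [eapply Rle_trans; [apply Rabs_pos | apply (Hrhs 0); lra]|].
  apply (secant_bounds_lipschitz_on _ (rhs f x)); [|exact Hrhs].
  apply (solution_secant_bounds phi); [exact Hx | lra].
Qed.

Lemma secant_bounds_translate x y tau a b :
  secant_bounds x (rhs f x) (a + tau) (b + tau) ->
  (forall t, a - h <= t <= b -> y t = x (t + tau)) ->
  (forall s, a + tau <= s <= b + tau -> inC h (seg x s)) ->
  secant_bounds y (rhs f y) a b.
Proof.
  intros HB Hy Hseg.
  pose proof (secant_bounds_shift _ _ _ _ (- tau) HB) as A.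
  replace (a + tau + - tau) with a in A by ring. replace (b + tau + - tau) with b in A by ring.
  eapply secant_bounds_ext; [exact A| |].
  - intros t Ht. rewrite Hy by lra. f_equal. ring.
  - intros t Ht. cbv beta. replace (t - - tau) with (t + tau) by ring. unfold rhs.
    rewrite Hy by lra. f_equal. apply f_local; [apply Hseg; lra|].
    intros s Hs. unfold seg. rewrite Hy by lra. f_equal. ring.
Qed.

Definition glue (g z : R -> R) (b t : R) : R := if Rle_dec t b then g t else z (t - b).

Lemma glue_left g z b t : t <= b -> glue g z b t = g t.
Proof. intros Ht. unfold glue. destruct (Rle_dec t b); [reflexivity | lra]. Qed.

Lemma glue_right g z b t : is_solution h f (seg g b) z -> b - h <= t ->
  glue g z b t = z (t - b).
Proof.
  intros [Hz _] Ht. unfold glue. destruct (Rle_dec t b); [|reflexivity].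
  rewrite Hz by lra. unfold seg. f_equal. ring.
Qed.

Lemma glue_solution L a b g z : a <= b -> 0 <= L ->
  secant_bounds g (rhs f g) a b -> lipschitz_on L (a - h) b g ->
  (forall s, a - h <= s <= b -> 0 <= g s) -> is_solution h f (seg g b) z ->
  (forall t, a - h <= t -> 0 <= glue g z b t) /\
  (forall T, cont_on (a - h) T (glue g z b)) /\
  (forall t, a < t -> is_derive (glue g z b) t (rhs f (glue g z b) t)).
Proof.
  intros Hab HL Hg Lg Ng Hz. set (G := glue g z b).
  assert (Right : forall t, b - h <= t -> G t = z (t + - b)).
  { intros t Ht. unfold G. now rewrite glue_right. }
  assert (NG : forall t, a - h <= t -> 0 <= G t).
  { intros t Ht. destruct (Rle_dec t b).
    - unfold G. rewrite glue_left by assumption. apply Ng. lra.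
    - rewrite Right by lra. apply (proj1 (proj2 Hz)). lra. }
  assert (LG : forall T, b <= T -> exists L', 0 <= L' /\ lipschitz_on L' (a - h) T G).
  { intros T HT.
    destruct (solution_lipschitz_on _ _ (T - b) Hz ltac:(lra)) as [Lz [HLz Lip]].
    exists (Rmax L Lz). split; [eapply Rle_trans; [exact HL | apply Rmax_l]|].
    apply lipschitz_on_glue with b; [exact HL | exact HLz | |].
    - eapply lipschitz_on_ext; [exact Lg|]. intros t Ht. unfold G. now rewrite glue_left by lra.
    - pose proof (lipschitz_on_translate _ _ _ b _ Lip) as A.
      replace (0 + b) with b in A by ring. replace (T - b + b) with T in A by ring.
      eapply lipschitz_on_ext; [exact A|]. intros t Ht. now rewrite Right by lra. }
  assert (BG : forall T, b <= T -> secant_bounds G (rhs f G) a T).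
  { intros T HT. apply secant_bounds_glue with b.
    - eapply secant_bounds_ext; [exact Hg | |].
      + intros t Ht. unfold G. now rewrite glue_left by lra.
      + intros t Ht. apply rhs_local; [now apply (inC_seg_lipschitz_on L a b)|].
        intros s Hs. unfold G. now rewrite glue_left by lra.
    - apply (secant_bounds_translate z G (- b)).
      + apply (solution_secant_bounds (seg g b)); [exact Hz | lra].
      + intros t Ht. apply Right. lra.
      + intros s Hs. apply (solution_seg_inC (seg g b)); [exact Hz | lra]. }
  split; [exact NG|]. split.
  - intros T. destruct (LG (Rmax T b) (Rmax_r T b)) as [L' [_ HL']].
    eapply cont_on_sub; [apply (lipschitz_on_cont_on L'); exact HL' | lra | apply Rmax_l].
  - intros t Ht.
    destruct (LG (Rmax b t + 1) ltac:(pose proof (Rmax_l b t); lra)) as [L' [_ HL']].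
    apply secant_bounds_is_derive with a (Rmax b t + 1).
    + apply BG. pose proof (Rmax_l b t). lra.
    + apply (rhs_cont_on L'); [exact HL' | intros s Hs; apply NG; lra].
    + pose proof (Rmax_r b t). lra.
Qed.

Lemma zero_solution phi : f (cst 0) = 0 -> (forall s, - h <= s <= 0 -> phi s = 0) ->
  is_solution h f phi (fun _ => 0).
Proof.
  intros Hf0 Hphi. split; [|split; [|split]].
  - intros s Hs. now rewrite Hphi.
  - intros; lra.
  - intros T. apply (lipschitz_on_cont_on 0). intros s t _ _.
    rewrite Rminus_eq_0, Rabs_R0. lra.
  - intros t Ht. change (seg (fun _ : R => 0) t) with (cst 0). rewrite Hf0.
    replace (- 0 + 0) with 0 by ring. apply is_derive_Reals, derivable_pt_lim_const.
Qed.

Lemma shifted_solution x t0 :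
  (forall t, t0 - h <= t -> 0 <= x t) -> (forall T, cont_on (t0 - h) T x) ->
  (forall t, t0 < t -> is_derive x t (rhs f x t)) ->
  is_solution h f (seg x t0) (fun s => x (t0 + s)).
Proof.
  intros Hn Hc Hd. split; [|split; [|split]].
  - reflexivity.
  - intros t Ht. apply Hn. lra.
  - intros T. pose proof (cont_on_shift _ _ t0 x (Hc (t0 + T))) as A.
    replace (t0 - h - t0) with (- h) in A by ring. now replace (t0 + T - t0) with T in A by ring.
  - intros t Ht.
    replace (seg (fun s => x (t0 + s)) t) with (seg x (t0 + t))
      by (apply functional_extensionality; intro u; unfold seg; f_equal; ring).
    apply is_derive_Reals. intros eps Heps.
    destruct (proj1 (is_derive_Reals _ _ _) (Hd (t0 + t) ltac:(lra)) eps Heps) as [d Hdl].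
    exists d. intros k Hk Hkd. replace (t0 + (t + k)) with (t0 + t + k) by ring. now apply Hdl.
Qed.

(** * Construction of the connecting orbit *)

Section EntireSolution.

Variable K : R.
Hypothesis solution_exists : forall phi, inC h phi -> exists x, is_solution h f phi x.
Hypothesis solution_unique : forall phi x y, inC h phi ->
  is_solution h f phi x -> is_solution h f phi y -> forall t, - h <= t -> x t = y t.
Hypothesis f_zero : f (cst 0) = 0.
Hypothesis K_attracts : forall phi x, inC h phi -> (exists s, - h <= s <= 0 /\ phi s <> 0) ->
  is_solution h f phi x -> is_lim x p_infty K.

Lemma zero_history_stays_zero x t0 :
  (forall t, t0 - h <= t -> 0 <= x t) -> (forall T, cont_on (t0 - h) T x) ->
  (forall t, t0 < t -> is_derive x t (rhs f x t)) ->
  (forall s, t0 - h <= s <= t0 -> x s = 0) -> forall t, t0 - h <= t -> x t = 0.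
Proof.
  intros Hn Hc Hd H0 t Ht.
  assert (Init : inC h (seg x t0)).
  { apply inC_seg; [apply (cont_on_sub (t0 - h) (t0 + 1)); [apply Hc | lra | lra] |].
    intros s Hs. apply Hn. lra. }
  assert (Zero : is_solution h f (seg x t0) (fun _ => 0)).
  { apply zero_solution; [exact f_zero|]. intros s Hs. apply H0. lra. }
  pose proof (solution_unique _ _ _ Init (shifted_solution x t0 Hn Hc Hd) Zero
                (t - t0) ltac:(lra)) as E.
  simpl in E. now replace (t0 + (t - t0)) with t in E by ring.
Qed.

Section Passage.

Variables c B : R.
Hypothesis c_pos : 0 < c.
Hypothesis c_lt_K : c < K.
Hypothesis f_le_B : forall phi, inC h phi -> dist_le h phi (cst 0) c -> Rabs (f phi) <= B.

Lemma B_nonneg : 0 <= B.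
Proof.
  eapply Rle_trans; [apply Rabs_pos | apply (f_le_B (cst 0))]; [apply inC_cst; lra|].
  intros s _. unfold cst. rewrite Rminus_0_r, Rabs_R0. lra.
Qed.

(* While [0 <= x <= c], the slope [- x + f (x_t)] of a solution is bounded by [c + B]. *)
Definition reaches (x : R -> R) (tau : R) : Prop :=
  0 <= tau /\ (forall s, - h <= s <= tau -> 0 <= x s <= c) /\ x tau = c /\
  lipschitz_on (c + B) (- h) tau x.

Lemma first_passage e x : 0 < e < c -> is_solution h f (cst e) x -> exists tau, reaches x tau.
Proof.
  intros He Hx. pose proof Hx as [Hi [Hn [Hc _]]].
  assert (Hlim : is_lim x p_infty K).
  { apply (K_attracts (cst e)); [apply inC_cst; lra | | exact Hx].
    exists 0. split; [lra | unfold cst; lra]. }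
  destruct (first_crossing x c) as [tau [H0 [Hle Htau]]].
  - intros T. apply (cont_on_sub (- h) T); [apply Hc | lra | lra].
  - rewrite Hi by lra. unfold cst. lra.
  - now apply (is_lim_p_infty_gt x K).
  - assert (Hb : forall s, - h <= s <= tau -> 0 <= x s <= c).
    { intros s Hs. split; [apply Hn; lra|].
      destruct (Rle_dec s 0); [rewrite Hi by lra; unfold cst; lra | apply Hle; lra]. }
    exists tau. split; [exact H0|]. split; [exact Hb|]. split; [exact Htau|].
    rewrite <- (Rmax_right 0 (c + B)) by (pose proof B_nonneg; lra).
    apply lipschitz_on_glue with 0; [lra | pose proof B_nonneg; lra | |].
    + intros s t Hs Ht. rewrite !Hi by assumption. unfold cst.
      rewrite Rminus_eq_0, Rabs_R0. lra.
    + apply (secant_bounds_lipschitz_on _ (rhs f x));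
        [apply (solution_secant_bounds (cst e)); [exact Hx | lra]|].
      intros t Ht. unfold rhs.
      assert (A : Rabs (f (seg x t)) <= B).
      { apply f_le_B; [apply (solution_seg_inC (cst e)); [exact Hx | lra]|].
        intros u Hu. unfold seg, cst. rewrite Rminus_0_r, Rabs_right by (apply Rle_ge, Hn; lra).
        apply Hb. lra. }
      eapply Rle_trans; [apply Rabs_triang|]. rewrite Rabs_Ropp, Rabs_right by (apply Rle_ge, Hn; lra).
      pose proof (Hb t ltac:(lra)). lra.
Qed.

Lemma small_data_passages : exists (x : nat -> R -> R) (tau : nat -> R),
  (forall k, exists e, 0 < e <= / (INR k + 1) /\ is_solution h f (cst e) (x k)) /\
  (forall k, reaches (x k) (tau k)).
Proof.
  set (e := fun k : nat => Rmin (c / 2) (/ (INR k + 1))).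
  assert (He : forall k, 0 < e k < c /\ e k <= / (INR k + 1)).
  { intro k. unfold e. pose proof (Rmin_l (c / 2) (/ (INR k + 1))).
    pose proof (Rmin_r (c / 2) (/ (INR k + 1))).
    assert (0 < Rmin (c / 2) (/ (INR k + 1)))
      by (apply Rmin_pos; [|apply Rinv_0_lt_compat; pose proof (pos_INR k)]; lra).
    lra. }
  destruct (choice (fun k x => is_solution h f (cst (e k)) x)) as [x Hx].
  { intro k. apply solution_exists, inC_cst. pose proof (He k). lra. }
  destruct (choice (fun k tau => reaches (x k) tau)) as [tau Htau].
  { intro k. apply (first_passage (e k)); [apply He | apply Hx]. }
  exists x, tau. split; [|exact Htau].
  intro k. exists (e k). split; [pose proof (He k); lra | apply Hx].
Qed.

(* Freezing [x] outside [[-h, tau]] makes it globally Lipschitz and bounded. *)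
Definition stopped (x : R -> R) (tau t : R) : R := x (clamp (- h) tau t).

Lemma stopped_lipschitz x tau : reaches x tau -> lipschitz (c + B) (stopped x tau).
Proof.
  intros (Ht & _ & _ & Hl). apply lipschitz_clamp; [pose proof B_nonneg; lra | lra | exact Hl].
Qed.

Lemma stopped_bounds x tau t : reaches x tau -> 0 <= stopped x tau t <= c.
Proof. intros (Ht & Hb & _). apply Hb, clamp_in. lra. Qed.

Lemma stopped_eq x tau t : - h <= t <= tau -> stopped x tau t = x t.
Proof. intros Ht. unfold stopped. now rewrite clamp_id. Qed.

Lemma zero_history_secant_solution L b w : 0 <= L -> 0 <= b ->
  lipschitz_on L (- h) b w -> (forall s, - h <= s <= b -> 0 <= w s) ->
  (forall s, - h <= s <= 0 -> w s = 0) -> secant_bounds w (rhs f w) 0 b -> w b = 0.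
Proof.
  intros HL Hb Lw Nw W0 Sw.
  replace (- h) with (0 - h) in Lw, Nw by ring.
  destruct (solution_exists (seg w b)) as [z Hz];
    [apply (inC_seg_lipschitz_on L 0 b); auto; lra|].
  destruct (glue_solution L 0 b w z) as [Gn [Gc Gd]]; auto.
  rewrite <- (glue_left w z b b (Rle_refl b)).
  apply (zero_history_stays_zero (glue w z b) 0); auto; [|lra].
  intros s Hs. rewrite glue_left by lra. apply W0. lra.
Qed.

Lemma stopped_solutions_limit (x : nat -> R -> R) (tau : nat -> R) (T : R) :
  (forall k, exists e, 0 < e <= / (INR k + 1) /\ is_solution h f (cst e) (x k)) ->
  (forall k, reaches (x k) (tau k)) -> (forall k, tau k <= T) ->
  exists w ts, lipschitz (c + B) w /\ (forall t, 0 <= w t) /\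
    (forall t, - h <= t <= 0 -> w t = 0) /\ 0 <= ts /\ w ts = c /\
    forall b, b < ts -> secant_bounds w (rhs f w) 0 b.
Proof.
  intros Hx Hr HT.
  set (L := c + B). assert (HL : 0 < L) by (unfold L; pose proof B_nonneg; lra).
  set (u := fun k => stopped (x k) (tau k)).
  assert (Lu : forall k, lipschitz L (u k)) by (intro k; now apply stopped_lipschitz).
  assert (Bu : forall k t, 0 <= u k t <= c) by (intros k t; now apply stopped_bounds).
  destruct (arzela_ascoli u c L ltac:(lra)) as [sg [w [Hsg Hlim]]]; [| exact Lu |].
  { intros k t. specialize (Bu k t). rewrite Rabs_right; lra. }
  destruct (cluster_point_of_bounded (fun j => tau (sg j)) 0 T) as [ts [Hts Hcl]].
  { intro j. destruct (Hr (sg j)). specialize (HT (sg j)). lra. }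
  exists w, ts. split; [now apply (locally_uniform_limit_lipschitz _ _ _ Hlim)|].
  split; [apply (locally_uniform_limit_ge _ _ _ Hlim); intros; apply Bu|].
  split; [|split; [lra|split]].
  - apply (locally_uniform_limit_vanishing _ _ _ _ Hlim). intros j t Ht.
    destruct (Hx (sg j)) as [e [He [Hi _]]].
    unfold u. rewrite stopped_eq, Hi by (destruct (Hr (sg j)); lra). unfold cst.
    pose proof (le_INR _ _ (strict_incr_ge_id sg Hsg j)).
    assert (/ (INR (sg j) + 1) <= / (INR j + 1))
      by (apply Rinv_le_contravar; pose proof (pos_INR j); lra). lra.
  - apply (locally_uniform_limit_value _ _ L ts c (fun j => tau (sg j)) Hlim); [auto| |exact Hcl].
    intro j. unfold u. rewrite stopped_eq by (destruct (Hr (sg j)); lra). apply Hr.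
  - intros b Hb. apply (secant_bounds_limit L 0 b (fun j => u (sg j))); auto.
    { intros k s. apply Bu. }
    intros N. destruct (Hcl (ts - b) ltac:(lra) N) as [p [Hp Hclose]].
    exists p. split; [exact Hp|]. apply Rabs_lt_between in Hclose.
    destruct (Hx (sg p)) as [e [_ Hs]].
    apply (secant_bounds_translate (x (sg p)) _ 0).
    + rewrite !Rplus_0_r. apply (solution_secant_bounds (cst e)); [exact Hs | lra].
    + intros t Ht. rewrite Rplus_0_r. unfold u. apply stopped_eq. lra.
    + intros s Hs'. apply (solution_seg_inC (cst e)); [exact Hs | lra].
Qed.

Lemma passage_times_unbounded (x : nat -> R -> R) (tau : nat -> R) :
  (forall k, exists e, 0 < e <= / (INR k + 1) /\ is_solution h f (cst e) (x k)) ->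
  (forall k, reaches (x k) (tau k)) -> forall n : nat, exists k, INR n <= tau k.
Proof.
  intros Hx Hr n. apply NNPP. intro Hno.
  destruct (stopped_solutions_limit x tau (INR n) Hx Hr) as (w & ts & Lw & Nw & W0 & Hts & Wts & Sw).
  { intro k. apply Rlt_le, Rnot_le_lt. intro. apply Hno. now exists k. }
  set (L := c + B) in *. assert (HL : 0 < L) by (unfold L; pose proof B_nonneg; lra).
  set (d := c / (2 * L)).
  assert (Hd : 0 < d /\ L * d = c / 2) by (unfold d; split; [apply Rdiv_lt_0_compat|field]; lra).
  assert (Late : c <= L * ts).
  { pose proof (Lw ts 0) as A. now rewrite Wts, W0, !Rminus_0_r, !Rabs_right in A by lra. }
  assert (Wb : c / 2 <= w (ts - d)).
  { pose proof (Lw ts (ts - d)) as A.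
    replace (ts - (ts - d)) with d in A by ring. rewrite Wts, (Rabs_right d) in A by lra.
    apply Rabs_le_between in A. lra. }
  assert (w (ts - d) = 0); [|lra].
  apply (zero_history_secant_solution L); [lra | nra | intros s t _ _; apply Lw | auto | auto |].
  apply Sw. lra.
Qed.

Lemma solution_on_negative_half_line : exists g,
  lipschitz (c + B) g /\ (forall t, 0 <= g t <= c) /\ g 0 = c /\
  forall a, a <= 0 -> secant_bounds g (rhs f g) a 0.
Proof.
  destruct small_data_passages as [x [tau [Hx Hr]]].
  destruct (choice _ (passage_times_unbounded x tau Hx Hr)) as [k Hk].
  set (L := c + B). assert (HL : 0 < L) by (unfold L; pose proof B_nonneg; lra).
  set (y := fun n t => stopped (x (k n)) (tau (k n)) (t + tau (k n))).
  assert (Ly : forall n, lipschitz L (y n)).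
  { intros n s t. unfold y. eapply Rle_trans; [apply stopped_lipschitz, Hr|].
    right. f_equal. f_equal. ring. }
  assert (By : forall n t, 0 <= y n t <= c) by (intros; apply stopped_bounds, Hr).
  destruct (arzela_ascoli y c L ltac:(lra)) as [sg [g [Hsg Hlim]]]; [| exact Ly |].
  { intros n t. specialize (By n t). rewrite Rabs_right; lra. }
  exists g. split; [now apply (locally_uniform_limit_lipschitz _ _ _ Hlim)|].
  split; [split; [apply (locally_uniform_limit_ge _ _ _ Hlim) | apply (locally_uniform_limit_le _ _ _ Hlim)];
          intros; apply By|].
  split.
  - apply (locally_uniform_limit_value _ _ L 0 c (fun _ => 0) Hlim); [auto| |].
    + intro j. unfold y. rewrite Rplus_0_l, stopped_eq by (destruct (Hr (k (sg j))); lra).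
      apply Hr.
    + intros r Hr0 N. exists N. split; [lia|]. rewrite Rminus_0_r, Rabs_R0. exact Hr0.
  - intros a Ha. apply (secant_bounds_limit L a 0 (fun j => y (sg j))); [auto | | exact Hlim |].
    { intros j s. apply By. }
    intros N. destruct (INR_unbounded (- a)) as [M HM].
    exists (Nat.max N M). split; [lia|].
    set (n := k (sg (Nat.max N M))).
    assert (Long : - a <= tau n).
    { unfold n. pose proof (Hk (sg (Nat.max N M))).
      pose proof (le_INR _ _ (strict_incr_ge_id sg Hsg (Nat.max N M))).
      pose proof (le_INR _ _ (Nat.le_max_r N M)). lra. }
    destruct (Hx n) as [e [_ Hs]]. destruct (Hr n) as [Ht0 [_ [_ _]]].
    apply (secant_bounds_translate (x n) _ (tau n)).
    + apply (solution_secant_bounds (cst e)); [exact Hs | lra].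
    + intros t Ht. unfold y. fold n. apply stopped_eq. lra.
    + intros s Hs'. apply (solution_seg_inC (cst e)); [exact Hs | lra].
Qed.

(* Attraction to [K] leaves no room for a nonzero entire solution below [c < K]. *)
Lemma entire_solution_below_c_vanishes L v : 0 <= L -> lipschitz L v ->
  (forall t, 0 <= v t <= c) -> (forall a b, a <= b -> secant_bounds v (rhs f v) a b) -> v 0 = 0.
Proof.
  intros HL Lv Bv Sv. apply NNPP. intro Hv0.
  assert (Dv : forall s, is_derive v s (rhs f v s)).
  { intro s. apply secant_bounds_is_derive with (s - 1) (s + 1); [apply Sv; lra | | lra].
    apply (rhs_cont_on L); [intros ? ? _ _; apply Lv | intros; apply Bv]. }
  assert (Hv : is_solution h f (seg v 0) (fun s => v (0 + s))).
  { apply shifted_solution; [intros; apply Bv | | intros; apply Dv].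
    intros T. apply (lipschitz_on_cont_on L). intros ? ? _ _. apply Lv. }
  assert (Lim : is_lim (fun s => v (0 + s)) p_infty K).
  { apply (K_attracts (seg v 0)); [| | exact Hv].
    - apply (inC_seg_lipschitz_on L 0 0); [intros ? ? _ _; apply Lv | intros; apply Bv | lra].
    - exists 0. split; [lra|]. unfold seg. now rewrite Rplus_0_r. }
  destruct (is_lim_p_infty_gt _ _ c Lim c_lt_K) as [M HM].
  specialize (HM (M + 1) ltac:(lra)). specialize (Bv (0 + (M + 1))). lra.
Qed.

Lemma negative_half_line_solution_vanishes g :
  lipschitz (c + B) g -> (forall t, 0 <= g t <= c) ->
  (forall a, a <= 0 -> secant_bounds g (rhs f g) a 0) -> is_lim g m_infty 0.
Proof.
  intros Lg Bg Sg. apply is_lim_spec. intro eps0. apply NNPP. intro Hno.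
  assert (Far : forall k : nat, exists t, t < - INR k /\ eps0 <= g t).
  { intro k. apply NNPP. intro Hk. apply Hno. exists (- INR k). intros t Ht.
    rewrite Rminus_0_r, Rabs_right by (apply Rle_ge, Bg).
    apply Rnot_le_lt. intro Hle. apply Hk. now exists t. }
  destruct (choice _ Far) as [t Ht].
  set (L := c + B). assert (HL : 0 < L) by (unfold L; pose proof B_nonneg; lra).
  set (w := fun k s => g (s + t k)).
  assert (Lw : forall k, lipschitz L (w k)).
  { intros k s s'. unfold w. replace (s - s') with ((s + t k) - (s' + t k)) by ring. apply Lg. }
  destruct (arzela_ascoli w c L ltac:(lra)) as [sg [v [Hsg Hlim]]]; [| exact Lw |].
  { intros k s. specialize (Bg (s + t k)). unfold w. rewrite Rabs_right; lra. }
  assert (V0 : eps0 <= v 0).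
  { apply Rle_plus_epsilon. intros e He.
    destruct (Hlim 0 e He) as [N HN]. pose proof (HN N (le_n N) 0 ltac:(rewrite Rabs_R0; lra)) as A.
    unfold w in A. rewrite Rplus_0_l in A. apply Rabs_le_between in A. destruct (Ht (sg N)). lra. }
  assert (v 0 = 0); [|pose proof (cond_pos eps0); lra].
  apply (entire_solution_below_c_vanishes L); [lra | now apply (locally_uniform_limit_lipschitz _ _ _ Hlim) | |].
  { intro s. split; [apply (locally_uniform_limit_ge _ _ _ Hlim) |
                     apply (locally_uniform_limit_le _ _ _ Hlim)]; intros; apply Bg. }
  intros a b Hab. apply (secant_bounds_limit L a b (fun j => w (sg j))); [auto | | exact Hlim |].
  { intros j s. apply Bg. }
  intros N. destruct (INR_unbounded (Rabs b)) as [M HM].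
  exists (Nat.max N M). split; [lia|].
  set (k := sg (Nat.max N M)).
  assert (Far' : t k + b <= 0).
  { unfold k. pose proof (proj1 (Ht (sg (Nat.max N M)))).
    pose proof (le_INR _ _ (strict_incr_ge_id sg Hsg (Nat.max N M))).
    pose proof (le_INR _ _ (Nat.le_max_r N M)). pose proof (Rle_abs b). lra. }
  apply (secant_bounds_translate g _ (t k)).
  - apply (secant_bounds_sub g _ (a + t k) 0); [apply Sg | | ]; lra.
  - intros s _. reflexivity.
  - intros s Hs. apply (inC_seg_lipschitz_on L (a + t k) (b + t k));
      [intros ? ? _ _; apply Lg | intros; apply Bg | lra].
Qed.

End Passage.

Lemma forward_extension L g : 0 <= L -> lipschitz L g -> (forall t, 0 <= g t) -> g 0 <> 0 ->
  (forall a, a <= 0 -> secant_bounds g (rhs f g) a 0) ->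
  exists psi, (forall t, t <= 0 -> psi t = g t) /\ (forall t, 0 <= psi t) /\
    (forall a T, cont_on a T psi) /\ (forall t, is_derive psi t (rhs f psi t)) /\
    is_lim psi p_infty K.
Proof.
  intros HL Lg Ng G0 Sg.
  assert (Lg' : forall a b, lipschitz_on L a b g) by (intros a b s t _ _; apply Lg).
  assert (C0 : inC h (seg g 0)).
  { apply (inC_seg_lipschitz_on L 0 0); [apply Lg' | intros; apply Ng | lra]. }
  destruct (solution_exists _ C0) as [z Hz].
  assert (Ext : forall a, a <= 0 ->
    (forall t, a - h <= t -> 0 <= glue g z 0 t) /\ (forall T, cont_on (a - h) T (glue g z 0)) /\
    (forall t, a < t -> is_derive (glue g z 0) t (rhs f (glue g z 0) t))).
  { intros a Ha. apply (glue_solution L); auto. }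
  exists (glue g z 0). split; [intros; now apply glue_left|].
  split; [|split; [|split]].
  - intro t. apply (Ext (- Rabs t)); [pose proof (Rabs_pos t); lra|].
    pose proof (Rle_abs (- t)). rewrite Rabs_Ropp in *. lra.
  - intros a T. apply (cont_on_sub (Rmin 0 (a + h) - h) T); [apply Ext, Rmin_l | | lra].
    pose proof (Rmin_r 0 (a + h)). lra.
  - intro t. apply (Ext (- Rabs t - 1)); [pose proof (Rabs_pos t); lra|].
    pose proof (Rle_abs (- t)). rewrite Rabs_Ropp in *. lra.
  - apply (is_lim_ext_loc z).
    + exists 0. intros t Ht. rewrite glue_right by (exact Hz || lra). f_equal. ring.
    + apply (K_attracts (seg g 0)); [exact C0 | | exact Hz].
      exists 0. split; [lra|]. unfold seg. now rewrite Rplus_0_r.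
Qed.

Hypothesis f_nonneg : forall phi, inC h phi -> 0 <= f phi.
Hypothesis K_pos : 0 < K.

Lemma entire_solution_positive psi : (forall t, 0 <= psi t) -> (forall a T, cont_on a T psi) ->
  (forall t, is_derive psi t (rhs f psi t)) -> is_lim psi p_infty K -> forall t, 0 < psi t.
Proof.
  intros Hn Hc Hd Hlim t0. destruct (Hn t0) as [|Z]; [assumption | exfalso].
  assert (Before : forall s, s <= t0 -> psi s = 0).
  { intros s Hs. apply Rle_antisym; [|apply Hn].
    assert (A : exp s * psi s <= exp t0 * psi t0).
    { apply (exp_mul_nondecreasing psi (rhs f psi)); [exact Hd | | exact Hs].
      intro u. unfold rhs. enough (0 <= f (seg psi u)) by lra. apply f_nonneg, inC_seg;
        [apply Hc | intros; apply Hn]. }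
    rewrite <- Z, Rmult_0_r in A. pose proof (exp_pos s). nra. }
  assert (After : forall t, t0 - h <= t -> psi t = 0).
  { apply zero_history_stays_zero; [intros; apply Hn | intro; apply Hc | intros; apply Hd |].
    intros s Hs. apply Before. lra. }
  destruct (is_lim_p_infty_gt psi K 0 Hlim K_pos) as [M HM].
  specialize (HM (Rmax M t0 + 1) ltac:(pose proof (Rmax_l M t0); lra)).
  rewrite After in HM by (pose proof (Rmax_r M t0); lra). lra.
Qed.

End EntireSolution.

End Functional.

Theorem theorem5 (h : R) (f : (R -> R) -> R) (K : R) :
  0 < h ->
  (forall phi, inC h phi -> 0 <= f phi) ->
  functional_continuous h f ->
  maps_bounded h f ->
  (forall phi, inC h phi -> exists x, is_solution h f phi x) ->
  (forall phi x y, inC h phi -> is_solution h f phi x -> is_solution h f phi y ->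
     forall t, - h <= t -> x t = y t) ->
  f (cst 0) = 0 ->
  0 < K ->
  f (cst K) = K ->
  (forall phi x, inC h phi -> (exists s, - h <= s <= 0 /\ phi s <> 0) ->
     is_solution h f phi x -> is_lim x p_infty K) ->
  exists psi : R -> R,
    (forall t, 0 < psi t) /\
    (forall t, is_derive psi t (- psi t + f (seg psi t))) /\
    is_lim psi m_infty 0 /\
    is_lim psi p_infty K.
Proof.
  intros Hh Hnn Hcont Hbnd Hex Huniq Hf0 HK _ Hatt.
  set (c := K / 2). assert (Hc : 0 < c < K) by (unfold c; lra).
  destruct (Hbnd c) as [B HB].
  pose proof (B_nonneg h f c B (proj1 Hc) HB) as HB0.
  destruct (solution_on_negative_half_line h f Hh Hcont Hbnd K Hex Huniq Hf0 Hatt c B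
              (proj1 Hc) (proj2 Hc) HB) as [g [Lg [Bg [G0 Sg]]]].
  destruct (forward_extension h f Hh Hcont Hbnd K Hex Hatt (c + B) g) as
    [psi [Epsi [Npsi [Cpsi [Dpsi Lpsi]]]]]; [lra | exact Lg | intro; apply Bg | lra | exact Sg |].
  exists psi. split; [|split; [exact Dpsi | split; [|exact Lpsi]]].
  - exact (entire_solution_positive h f Hh K Huniq Hf0 Hnn HK psi Npsi Cpsi Dpsi Lpsi).
  - apply (is_lim_ext_loc g); [exists 0; intros; symmetry; apply Epsi; lra|].
    exact (negative_half_line_solution_vanishes h f Hh Hcont K Hatt c B
             (proj1 Hc) (proj2 Hc) HB g Lg Bg Sg).
Qed.
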